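(* Let $\lambda_1,\lambda_2,\sigma_1,\sigma_2\in\mathbb{C}^*$ and $\eta_1,\eta_2\in\mathbb{C}$ with $\lambda_1\neq\lambda_2$. Suppose that $V$ is a nonzero $\mathcal{G}$-submodule of $\Omega(\lambda_1,\eta_1,\sigma_1,0)\otimes\Omega(\lambda_2,\eta_2,\sigma_2,0)$. Then $1\otimes 1\in V$.
   Context: The planar Galilean conformal algebra $\mathcal{G}$ is the complex Lie algebra with basis $\{L_m,H_m,I_m,J_m\mid m\in\mathbb{Z}\}$ and brackets $[L_m,L_n]=(n-m)L_{m+n}$, $[L_m,H_n]=nH_{m+n}$, $[L_m,I_n]=(n-m)I_{m+n}$, $[L_m,J_n]=(n-m)J_{m+n}$, $[H_m,I_n]=I_{m+n}$, $[H_m,J_n]=-J_{m+n}$, and $[H_m,H_n]=[I_m,I_n]=[J_m,J_n]=[I_m,J_n]=0$ for all $m,n\in\mathbb{Z}$. For $\lambda,\sigma\in\mathbb{C}^*$, $\eta\in\mathbb{C}$, the module $\Omega(\lambda,\eta,\sigma,0)$ is a polynomial algebra $\mathbb{C}[X,Y]$ with $L_m f(X,Y)=\lambda^m(Y-mX+m\eta)f(X,Y-m)$, $H_m f(X,Y)=\lambda^m X f(X,Y-m)$, $I_m f(X,Y)=\lambda^m\sigma f(X-1,Y-m)$, $J_m f(X,Y)=0$. The tensor product of $\mathcal{G}$-modules has action $x(v\otimes w)=xv\otimes w+v\otimes xw$. *)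

From HB Require Import structures.
From mathcomp Require Import all_boot all_order all_algebra.
From mathcomp Require Import reals.
From mathcomp Require Import complex.
From mathcomp Require Import mpoly.
Set Implicit Arguments. Unset Strict Implicit. Unset Printing Implicit Defensive.
Import Order.TTheory GRing.Theory Num.Theory.
Local Open Scope ring_scope.

(* The tensor product Omega(l1,e1,s1,0) (x) Omega(l2,e2,s2,0)
   = C[X1,Y1] (x) C[X2,Y2] is identified with C[X1,Y1,X2,Y2] = {mpoly C[4]},
   f(X1,Y1) (x) g(X2,Y2) |-> f(X1,Y1) g(X2,Y2).
   Variables: 'X_0 = X1, 'X_1 = Y1, 'X_2 = X2, 'X_3 = Y2. *)

Section Defs.
Variable R : realType.
Local Notation C := (R[i]).
Local Notation P := {mpoly C[4]}.

Definition v0 : 'I_4 := @Ordinal 4 0 isT.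
Definition v1 : 'I_4 := @Ordinal 4 1 isT.
Definition v2 : 'I_4 := @Ordinal 4 2 isT.
Definition v3 : 'I_4 := @Ordinal 4 3 isT.

Definition shift4 (a1 b1 a2 b2 : C) (F : P) : P :=
  comp_mpoly [tuple 'X_v0 - a1%:MP; 'X_v1 - b1%:MP; 'X_v2 - a2%:MP; 'X_v3 - b2%:MP] F.

(* Action of L_m, H_m, I_m, J_m on the tensor product, x(v(x)w) = xv(x)w + v(x)xw. *)
Definition actL (l1 e1 l2 e2 : C) (m : int) (F : P) : P :=
  (l1 ^ m) *: (('X_v1 - m%:~R *: 'X_v0 + (m%:~R * e1)%:MP) * shift4 0 m%:~R 0 0 F)
  + (l2 ^ m) *: (('X_v3 - m%:~R *: 'X_v2 + (m%:~R * e2)%:MP) * shift4 0 0 0 m%:~R F).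

Definition actH (l1 l2 : C) (m : int) (F : P) : P :=
  (l1 ^ m) *: ('X_v0 * shift4 0 m%:~R 0 0 F)
  + (l2 ^ m) *: ('X_v2 * shift4 0 0 0 m%:~R F).

Definition actI (l1 s1 l2 s2 : C) (m : int) (F : P) : P :=
  (l1 ^ m * s1) *: shift4 1 m%:~R 0 0 F
  + (l2 ^ m * s2) *: shift4 0 0 1 m%:~R F.

Definition actJ (m : int) (F : P) : P := 0.

(* V is a G-submodule of the tensor product: a C-subspace stable under all
   basis elements L_m, H_m, I_m, J_m (hence under all of G). *)
Definition is_submodule (l1 e1 s1 l2 e2 s2 : C) (V : P -> Prop) : Prop :=
  V 0 /\
  (forall F G, V F -> V G -> V (F + G)) /\
  (forall (c : C) F, V F -> V (c *: F)) /\
  (forall m F, V F -> V (actL l1 e1 l2 e2 m F)) /\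
  (forall m F, V F -> V (actH l1 l2 m F)) /\
  (forall m F, V F -> V (actI l1 s1 l2 s2 m F)) /\
  (forall m F, V F -> V (actJ m F)).
End Defs.

(* Let G be a nonzero element of V of least total degree, and let E1, T1, E2, T2
   be the shifts by 1 of X1, Y1, X2, Y2. Then
     I_k G = l1^k T1^k (s1 E1 G) + l2^k T2^k (s2 E2 G).
   Each T - 1 lowers the degree, so taking the differences x_(k+1) - l1 x_k of
   this sequence deg G times kills its first part; by minimality what remains
   forces T2 to fix s2 E2 G, and symmetrically T1 fixes s1 E1 G. The terms
   k = 0, 1 and l1 != l2 then put E1 G and E2 G in V, and minimality again
   gives E1 G = G = E2 G. So G is invariant under unit shifts of all four
   variables, hence a nonzero constant, and 1 lies in V. *)

From HB Require Import structures.
From mathcomp Require Import all_boot all_order all_algebra.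
From mathcomp Require Import reals complex mpoly.
From mathcomp Require Import ring zify boolp.
Set Implicit Arguments. Unset Strict Implicit. Unset Printing Implicit Defensive.
Import GRing.Theory Num.Theory.
Local Open Scope ring_scope.

Lemma ex_minimal (T : Type) (P : T -> Prop) (f : T -> nat) :
  (exists x, P x) -> exists2 x, P x & forall y, P y -> (f x <= f y)%N.
Proof.
move=> [x Px].
have : exists k, `[< exists y, P y /\ f y = k >] by exists (f x); apply/asboolP; exists x.
case/ex_minnP => _ /asboolP [y [Py <-]] fy_min.
by exists y => // z Pz; apply: fy_min; apply/asboolP; exists z.
Qed.

Section Shift.
Variables (K : comNzRingType) (n : nat).
Local Notation P := {mpoly K[n]}.

Lemma comp_mpolyA k l (p : P) (lq : n.-tuple {mpoly K[k]}) (lr : k.-tuple {mpoly K[l]}) :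
  (p \mPo lq) \mPo lr = p \mPo [tuple tnth lq j \mPo lr | j < n].
Proof.
rewrite (comp_mpolyE p lq) (comp_mpolyE p) raddf_sum; apply: eq_bigr => m _ /=.
rewrite comp_mpolyZ rmorph_prod; congr (_ *: _); apply: eq_bigr => j _.
by rewrite rmorphXn tnth_mktuple.
Qed.

Definition mshift (a : 'I_n -> K) (F : P) : P :=
  F \mPo [tuple 'X_j - (a j)%:MP | j < n].
HB.instance Definition _ a :=
  GRing.LRMorphism.copy (mshift a) (comp_mpoly [tuple 'X_j - (a j)%:MP | j < n]).

Lemma mshiftX a j : mshift a 'X_j = 'X_j - (a j)%:MP.
Proof. by rewrite /mshift comp_mpolyXU -tnth_nth tnth_mktuple. Qed.

Lemma mshiftZ a c F : mshift a (c *: F) = c *: mshift a F.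
Proof. exact: linearZ. Qed.

Lemma eq_mshift a b : a =1 b -> mshift a =1 mshift b.
Proof. by move=> ab F; congr comp_mpoly; apply: eq_mktuple => j; rewrite ab. Qed.

Lemma mshift0 F : mshift (fun=> 0) F = F.
Proof.
rewrite -[RHS]comp_mpoly_id; congr comp_mpoly.
by apply: eq_mktuple => j; rewrite mpolyC0 subr0.
Qed.

Lemma mshift_comp a b F : mshift a (mshift b F) = mshift (fun j => a j + b j) F.
Proof.
rewrite /mshift comp_mpolyA; congr comp_mpoly; apply: eq_mktuple => j.
rewrite tnth_mktuple comp_mpolyB comp_mpolyC comp_mpolyXU -tnth_nth tnth_mktuple.
by rewrite mpolyCD opprD addrA.
Qed.

Lemma mshiftC a b F : mshift a (mshift b F) = mshift b (mshift a F).
Proof. by rewrite !mshift_comp; apply: eq_mshift => j; rewrite addrC. Qed.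

Lemma iter_mshift k a F : iter k (mshift a) F = mshift (fun j => k%:R * a j) F.
Proof.
elim: k => [|k IH]; first by rewrite -[LHS]mshift0; apply: eq_mshift => j; rewrite mul0r.
by rewrite iterS IH mshift_comp; apply: eq_mshift => j; rewrite mulrSr mulrDl mul1r addrC.
Qed.

Lemma mshift_inj a : injective (mshift a).
Proof.
apply: (can_inj (g := mshift (fun j => - a j))) => F.
by rewrite mshift_comp -[RHS]mshift0; apply: eq_mshift => j; rewrite addNr.
Qed.

End Shift.

Lemma mshift_fixed_of_scaled (K : fieldType) n (a b : 'I_n -> K) (c : K) (F : {mpoly K[n]}) :
  c != 0 -> mshift a (c *: mshift b F) = c *: mshift b F -> mshift a F = F.
Proof. by move=> c_neq0; rewrite mshiftZ mshiftC => /(scalerI c_neq0)/mshift_inj. Qed.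

Section MsizeBounds.
Variables (K : idomainType) (n : nat).
Local Notation P := {mpoly K[n]}.

Lemma msizeM_le_pred (p q : P) : (msize (p * q) <= (msize p + msize q).-1)%N.
Proof.
have [->|p0] := eqVneq p 0; first by rewrite mul0r msize0.
have [->|q0] := eqVneq q 0; first by rewrite mulr0 msize0.
by rewrite msizeM.
Qed.

Lemma msizeMC_le (p : P) (c : K) : (msize (p * c%:MP) <= msize p)%N.
Proof. by rewrite mulrC mul_mpolyC msizeZ_le. Qed.

Lemma msizeXU (j : 'I_n) : msize ('X_j : P) = 2%N.
Proof. by rewrite msizeX mdeg1. Qed.

Lemma msizeB_le (p q : P) : (msize (p - q) <= maxn (msize p) (msize q))%N.
Proof. by rewrite -(msizeN q); apply: msizeD_le. Qed.

Lemma msize_XsubC (j : 'I_n) (c : K) : (msize ('X_j - c%:MP : P) <= 2)%N.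
Proof.
apply: leq_trans (msizeB_le _ _) _; rewrite msizeXU geq_max leqnn msizeC.
by case: (c != 0).
Qed.

Lemma mderivXU (i j : 'I_n) : ('X_j : P)^`M(i) = ((j == i)%:R)%:MP.
Proof.
rewrite mderivX mnm1E; have [->|ji] := eqVneq j i; last by rewrite scale0r mpolyC0.
by rewrite -{1}[U_(i)%MM]add0m addmK mpolyX0 scale1r mpolyC1.
Qed.

Lemma msize_le_of_subr (p q : P) :
  (msize (p - q) <= (msize q).-1)%N -> (msize p <= msize q)%N.
Proof.
move=> pq; rewrite -[p](subrK q); apply: leq_trans (msizeD_le _ _) _.
by rewrite geq_max leqnn (leq_trans pq) // leq_pred.
Qed.

End MsizeBounds.

Section IterLinear.
Variables (K : pzRingType) (V : lmodType K) (f : {linear V -> V}).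

Lemma iter_linearZ k c x : iter k f (c *: x) = c *: iter k f x.
Proof. by elim: k => //= k ->; rewrite linearZ. Qed.

Lemma iter_linearB k x y : iter k f (x - y) = iter k f x - iter k f y.
Proof. by elim: k => //= k ->; rewrite linearB. Qed.
End IterLinear.

Section Taylor.
Variables (K : idomainType) (n : nat) (i : 'I_n) (a : 'I_n -> K).
Hypothesis a_supp : forall j, j != i -> a j = 0.
Local Notation P := {mpoly K[n]}.

Definition taylor_rem (F : P) : P := mshift a F - F + a i *: F^`M(i).

(* [mshift a F = F - a i *: F^`M(i)] up to terms of degree at most [d - 2],
   where [d] bounds the degree of [F]; carrying [d] makes this stable under
   sums and products by variables. *)
Definition taylor_bound d (F : P) :=
  [/\ (msize F <= d.+1)%N, (msize F^`M(i) <= d)%N & (msize (taylor_rem F) <= d.-1)%N].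

Lemma taylor_remD F G : taylor_rem (F + G) = taylor_rem F + taylor_rem G.
Proof. by rewrite /taylor_rem rmorphD mderivD -!mul_mpolyC; ring. Qed.

Lemma taylor_remZ c F : taylor_rem (c *: F) = c *: taylor_rem F.
Proof. by rewrite /taylor_rem -!mul_mpolyC rmorphM /= [mshift a _]comp_mpolyC mderiv_mulC; ring. Qed.

Lemma taylor_remMX F j :
  taylor_rem (F * 'X_j) = taylor_rem F * ('X_j - (a j)%:MP) + a i *: (F^`M(i) * (a j)%:MP).
Proof.
rewrite /taylor_rem rmorphM /= mshiftX mderivM mderivXU -!mul_mpolyC.
by have [->|ji] := eqVneq j i; rewrite ?eqxx ?(negbTE ji) ?(a_supp ji) /=; ring.
Qed.

Lemma taylor_bound0 d : taylor_bound d 0.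
Proof. by split; rewrite /taylor_rem ?mderiv0 ?rmorph0 ?subrr ?scaler0 ?addr0 msize0. Qed.

Lemma taylor_bound1 : taylor_bound 0 1.
Proof.
by split; rewrite /taylor_rem -?mpolyC1 ?mderivC ?rmorph1 ?subrr ?scaler0 ?addr0
  ?msize0 ?msizeC ?oner_neq0.
Qed.

Lemma taylor_bound_le d e F : (d <= e)%N -> taylor_bound d F -> taylor_bound e F.
Proof.
move=> de [F1 F2 F3]; split; first by apply: leq_trans F1 _.
  exact: leq_trans F2 de.
by apply: leq_trans F3 _; rewrite -!subn1 leq_sub2r.
Qed.

Lemma taylor_boundD d F G : taylor_bound d F -> taylor_bound d G -> taylor_bound d (F + G).
Proof.
case=> F1 F2 F3 [G1 G2 G3]; split; [|rewrite mderivD|rewrite taylor_remD //];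
  by apply: leq_trans (msizeD_le _ _) _; rewrite geq_max ?F1 ?F2 ?F3.
Qed.

Lemma taylor_boundZ d c F : taylor_bound d F -> taylor_bound d (c *: F).
Proof.
case=> F1 F2 F3; split; [|rewrite mderivZ|rewrite taylor_remZ];
  exact: leq_trans (msizeZ_le _ _) _.
Qed.

Lemma taylor_boundMX d F j : taylor_bound d F -> taylor_bound d.+1 (F * 'X_j).
Proof.
case=> F1 F2 F3; split.
- by apply: leq_trans (msizeM_le_pred _ _) _; rewrite msizeXU; lia.
- rewrite mderivM mderivXU; apply: leq_trans (msizeD_le _ _) _; rewrite geq_max.
  apply/andP; split; last exact: leq_trans (msizeMC_le _ _) F1.
  by apply: leq_trans (msizeM_le_pred _ _) _; rewrite msizeXU; lia.
- rewrite taylor_remMX; apply: leq_trans (msizeD_le _ _) _; rewrite geq_max.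
  apply/andP; split; last first.
    by apply: leq_trans (msizeZ_le _ _) _; apply: leq_trans (msizeMC_le _ _) _.
  have [->|rem_neq0] := eqVneq (taylor_rem F) 0; first by rewrite mul0r msize0.
  have : msize (taylor_rem F) != 0%N by rewrite msize_poly_eq0.
  have := msizeM_le_pred (taylor_rem F) ('X_j - (a j)%:MP); have := msize_XsubC j (a j).
  lia.
Qed.

Lemma taylor_boundMXn d F j k : taylor_bound d F -> taylor_bound (d + k) (F * 'X_j ^+ k).
Proof.
move=> Fd; elim: k => [|k IH]; first by rewrite expr0 mulr1 addn0.
by rewrite exprSr mulrA addnS; apply: taylor_boundMX.
Qed.

Lemma taylor_bound_monomial m : taylor_bound (mdeg m) 'X_[m].
Proof.
rewrite mpolyXE_id mdegE; elim: (index_enum _) => [|j r IH].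
  by rewrite !big_nil; apply: taylor_bound1.
by rewrite !big_cons mulrC addnC; apply: taylor_boundMXn.
Qed.

Lemma taylor_bound_msize F : taylor_bound (msize F).-1 F.
Proof.
rewrite {2}[F]mpolyE big_seq; apply: big_ind => [|G H|m mF].
- exact: taylor_bound0.
- exact: taylor_boundD.
apply/taylor_boundZ/(taylor_bound_le _ (taylor_bound_monomial m)).
by have := msize_mdeg_lt mF; case: (msize F).
Qed.

Lemma msize_mshift_subr F : (msize (mshift a F - F) <= (msize F).-1)%N.
Proof.
have [_ F2 F3] := taylor_bound_msize F.
have -> : mshift a F - F = taylor_rem F - a i *: F^`M(i) by rewrite /taylor_rem addrK.
apply: leq_trans (msizeB_le _ _) _; rewrite geq_max (leq_trans (msizeZ_le _ _) F2) andbT.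
exact: leq_trans F3 (leq_pred _).
Qed.

Lemma msize_mderiv_mshift_fixed F :
  a i != 0 -> mshift a F = F -> (msize F^`M(i) <= (msize F).-2)%N.
Proof.
move=> ai_neq0 fixF; have [_ _] := taylor_bound_msize F.
by rewrite /taylor_rem fixF subrr add0r msizeZ.
Qed.
End Taylor.

Notation mshift1 i := (mshift (fun j => (j == i)%:R)).

Section UnitShift.
Variables (K : idomainType) (n : nat).
Local Notation P := {mpoly K[n]}.

Lemma msize_mshift1_subr i (F : P) : (msize (mshift1 i F - F) <= (msize F).-1)%N.
Proof. by apply: (msize_mshift_subr (i := i)) => j /negbTE ->. Qed.

Lemma msize_mshift1 i (F : P) : (msize (mshift1 i F) <= msize F)%N.
Proof. exact/msize_le_of_subr/msize_mshift1_subr. Qed.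
End UnitShift.

Section Constant.
Variables (K : numDomainType) (n : nat).
Local Notation P := {mpoly K[n]}.

(* In characteristic 0, the derivative in a variable of the leading monomial
   has degree exactly [deg F - 1]. *)
Lemma mpolyC_of_msize_mderiv (F : P) :
  (forall i, msize F^`M(i) <= (msize F).-2)%N -> F = (F@_0)%:MP.
Proof.
move=> small_deriv; apply: msize1_polyC.
have [->|F_neq0] := eqVneq F 0; first by rewrite msize0.
suff lead0 : mlead F = 0%MM by rewrite -mlead_deg // lead0 mdeg0.
apply/mnmP => k; rewrite mnm0E; apply/eqP; apply: contraT; rewrite -lt0n => lead_k.
pose m := (mlead F - U_(k))%MM.
have mE : (m + U_(k))%MM = mlead F by apply: submK; rewrite lep1mP -lt0n.
have : m \in msupp F^`M(k).
  by rewrite mcoeff_msupp mcoeff_mderiv mE mulrn_eq0 negb_or mleadc_eq0 F_neq0.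
move/msize_mdeg_lt; have := small_deriv k; have := mlead_deg F_neq0.
by rewrite -mE mdegD mdeg1; lia.
Qed.

Lemma mshift1_invariant_polyC (F : P) : (forall i, mshift1 i F = F) -> F = (F@_0)%:MP.
Proof.
move=> fixF; apply: mpolyC_of_msize_mderiv => i.
apply: (msize_mderiv_mshift_fixed (i := i) _ _ (fixF i)); last by rewrite eqxx oner_neq0.
by move=> j /negbTE ->.
Qed.
End Constant.

Section Separation.
Variables (K : fieldType) (n : nat).
Local Notation P := {mpoly K[n]}.
Variable W : P -> Prop.
Hypothesis W_add : forall x y, W x -> W y -> W (x + y).
Hypothesis W_scale : forall (c : K) x, W x -> W (c *: x).
Variables (l m : K) (T U : {linear P -> P}).
Hypothesis T_lowers : forall x, (msize (T x - x) <= (msize x).-1)%N.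
Hypothesis U_lowers : forall x, (msize (U x - x) <= (msize x).-1)%N.
Hypotheses (l_neq_m : l != m) (m_neq0 : m != 0).

Definition orbits_in A B := forall k, W (l ^+ k *: iter k T A + m ^+ k *: iter k U B).

Definition mU_subl x := m *: U x - l *: x.

Lemma orbits_in_step A B : orbits_in A B -> orbits_in (l *: (T A - A)) (mU_subl B).
Proof.
move=> orbAB k; have := W_add (orbAB k.+1) (W_scale (- l) (orbAB k)).
rewrite /mU_subl !(iter_linearZ, iter_linearB) -!iterSr /= !exprS.
by move=> W_comb; congr W: W_comb; rewrite -!mul_mpolyC; ring.
Qed.

Lemma msize_iter_mU_subl k x : (msize (iter k mU_subl x) <= msize x)%N.
Proof.
elim: k => //= k IH; apply: leq_trans IH; apply: leq_trans (msizeB_le _ _) _.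
rewrite geq_max !(leq_trans (msizeZ_le _ _)) //.
exact/msize_le_of_subr/U_lowers.
Qed.

Lemma orbits_in_kill k A B : (msize A <= k)%N -> orbits_in A B -> orbits_in 0 (iter k mU_subl B).
Proof.
elim: k A B => [|k IH] A B; first by rewrite leqn0 msize_poly_eq0 => /eqP ->.
move=> A_le orbAB; rewrite iterSr; apply: (IH (l *: (T A - A))); last exact: orbits_in_step.
apply: leq_trans (msizeZ_le _ _) _; apply: leq_trans (T_lowers _) _.
by rewrite -subn1 leq_subLR add1n.
Qed.

Lemma orbits_in0 B : orbits_in 0 B -> W (m *: (U B - B)).
Proof.
move=> orbB; have := W_add (orbB 1%N) (W_scale (- m) (orbB 0%N)).
rewrite /= linear0 expr1 expr0 !scaler0 !add0r scale1r.
by move=> W_comb; congr W: W_comb; rewrite -!mul_mpolyC; ring.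
Qed.

Lemma mU_subl_eq0 y : mU_subl y = 0 -> y = 0.
Proof.
move=> y0; apply/eqP; rewrite -msize_poly_eq0.
have : (m - l) *: y = mU_subl y - m *: (U y - y) by rewrite /mU_subl -!mul_mpolyC; ring.
rewrite y0 sub0r => /(congr1 (fun p => msize p)); rewrite msizeN msizeZ ?subr_eq0 1?eq_sym //.
move=> msize_y; have : (msize y <= (msize y).-1)%N.
  by rewrite {1}msize_y; exact: leq_trans (msizeZ_le _ _) (U_lowers y).
by case: (msize y) => // k; rewrite ltnn.
Qed.

Lemma U_fixed_of_iter k x : U (iter k mU_subl x) = iter k mU_subl x -> U x = x.
Proof.
elim: k x => [//|k IH] x; rewrite iterSr => /IH fixU.
suff : mU_subl (U x - x) = 0 by move/mU_subl_eq0/eqP; rewrite subr_eq0 => /eqP.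
move: fixU; rewrite /mU_subl !linearB !linearZ /= => /eqP; rewrite -subr_eq0 => /eqP <-.
by rewrite -!mul_mpolyC; ring.
Qed.

Lemma orbits_in_U_fixed A B N : orbits_in A B ->
  (forall H, W H -> (msize H < N)%N -> H = 0) -> (msize B <= N)%N -> U B = B.
Proof.
move=> orbAB W_small B_le; apply: (@U_fixed_of_iter (msize A)).
set B' := iter _ mU_subl B.
suff : m *: (U B' - B') = 0 by move/eqP; rewrite scaler_eq0 (negbTE m_neq0) subr_eq0 => /eqP.
have [->|B'_neq0] := eqVneq B' 0; first by rewrite linear0 subrr scaler0.
apply: W_small; first exact/orbits_in0/(orbits_in_kill (leqnn _) orbAB).
have B'_gt0 : (0 < msize B')%N by rewrite lt0n msize_poly_eq0.
apply: leq_ltn_trans (msizeZ_le _ _) _; apply: leq_ltn_trans (U_lowers _) _.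
by rewrite prednK //; apply: leq_trans (msize_iter_mU_subl _ _) B_le.
Qed.

Lemma orbits_in_fixed A B : orbits_in A B -> T A = A -> U B = B -> W A /\ W B.
Proof.
move=> orbAB fixA fixB; have orb0 := orbAB 0%N; have orb1 := orbAB 1%N.
rewrite /= !expr0 !expr1 !scale1r fixA fixB in orb0 orb1.
have elim_comp c d (X Y : P) : c != d -> W (c *: X + d *: Y) -> W (X + Y) -> W X.
  move=> cd WXY WX_Y; have := W_scale (c - d)^-1 (W_add WXY (W_scale (- d) WX_Y)).
  have -> : c *: X + d *: Y + - d *: (X + Y) = (c - d) *: X by rewrite -!mul_mpolyC; ring.
  by rewrite scalerA mulVf ?scale1r // subr_eq0.
split; first exact: elim_comp orb1 orb0.
by apply: (elim_comp m l B A); rewrite 1?eq_sym // addrC.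
Qed.
End Separation.

Section TensorProduct.
Variable R : realType.
Local Notation C := R[i].
Local Notation P := {mpoly C[4]}.

Lemma ord4P (j : 'I_4) : [\/ j = v0, j = v1, j = v2 | j = v3].
Proof.
by case: j => [[|[|[|[|//]]]] ?]; [apply: Or41|apply: Or42|apply: Or43|apply: Or44];
  apply: val_inj.
Qed.

Lemma shift4E (a b c d : C) : shift4 a b c d =1 mshift (tnth [tuple a; b; c; d]).
Proof.
move=> F; apply: (congr1 (fun t => F \mPo t)).
by apply: eq_from_tnth => j; rewrite tnth_mktuple; case: (ord4P j) => ->.
Qed.

Variables (l1 s1 l2 s2 : C).

Lemma actI_iter (k : nat) (G : P) : actI l1 s1 l2 s2 k G =
  l1 ^+ k *: iter k (mshift1 v1) (s1 *: mshift1 v0 G)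
  + l2 ^+ k *: iter k (mshift1 v3) (s2 *: mshift1 v2 G).
Proof.
rewrite /actI -!scalerA; congr (_ *: _ + _ *: _);
  rewrite iter_mshift mshiftZ mshift_comp shift4E -pmulrn; apply: congr1;
  by apply: eq_mshift => j; case: (ord4P j) => ->; rewrite /= ?mulr0 ?mulr1 ?addr0 ?add0r.
Qed.

Variable V : P -> Prop.
Hypothesis V_add : forall F G, V F -> V G -> V (F + G).
Hypothesis V_scale : forall (c : C) F, V F -> V (c *: F).
Hypothesis V_actI : forall m F, V F -> V (actI l1 s1 l2 s2 m F).
Hypotheses (s1_neq0 : s1 != 0) (s2_neq0 : s2 != 0).
Hypotheses (l1_neq0 : l1 != 0) (l2_neq0 : l2 != 0) (l1_neq_l2 : l1 != l2).

Variable G : P.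
Hypotheses (V_G : V G) (G_neq0 : G != 0).
Hypothesis G_min : forall H, V H -> (msize H < msize G)%N -> H = 0.

Let X := s1 *: mshift1 v0 G.
Let Y := s2 *: mshift1 v2 G.

Lemma orbits_in_actI : orbits_in V l1 l2 (mshift1 v1) (mshift1 v3) X Y.
Proof. by move=> k; have := V_actI k V_G; rewrite actI_iter. Qed.

Lemma orbits_in_actI_sym : orbits_in V l2 l1 (mshift1 v3) (mshift1 v1) Y X.
Proof. by move=> k; rewrite addrC; apply: orbits_in_actI. Qed.

Lemma msize_scaled_mshift1 (s : C) i : (msize (s *: mshift1 i G) <= msize G)%N.
Proof. exact: leq_trans (msizeZ_le _ _) (msize_mshift1 _ _). Qed.

Lemma Y_fixed : mshift1 v3 Y = Y.
Proof.
apply: (orbits_in_U_fixed V_add V_scale (msize_mshift1_subr v1) (msize_mshift1_subr v3)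
  l1_neq_l2 l2_neq0 orbits_in_actI G_min).
exact: msize_scaled_mshift1.
Qed.

Lemma X_fixed : mshift1 v1 X = X.
Proof.
apply: (orbits_in_U_fixed V_add V_scale (msize_mshift1_subr v3) (msize_mshift1_subr v1)
  _ l1_neq0 orbits_in_actI_sym G_min); last exact: msize_scaled_mshift1.
by rewrite eq_sym.
Qed.

Lemma X_Y_in_V : V X /\ V Y.
Proof.
exact: (@orbits_in_fixed _ _ _ V_add V_scale _ _ (mshift1 v1) (mshift1 v3) l1_neq_l2 _ _
  orbits_in_actI X_fixed Y_fixed).
Qed.

Lemma mshift1_fixed_of_V i : V (mshift1 i G) -> mshift1 i G = G.
Proof.
move=> V_shift; apply/eqP; rewrite -subr_eq0; apply/eqP/G_min.
  by have := V_add V_shift (V_scale (-1) V_G); rewrite scaleN1r.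
apply: leq_ltn_trans (msize_mshift1_subr _ _) _.
by rewrite ltn_predL lt0n msize_poly_eq0.
Qed.

Lemma V_of_scaled (s : C) F : s != 0 -> V (s *: F) -> V F.
Proof. by move=> s_neq0 /(V_scale s^-1); rewrite scalerA mulVf // scale1r. Qed.

Lemma G_fixed i : mshift1 i G = G.
Proof.
have [V_X V_Y] := X_Y_in_V.
case: (ord4P i) => ->.
- exact: mshift1_fixed_of_V (V_of_scaled s1_neq0 V_X).
- exact: mshift_fixed_of_scaled s1_neq0 X_fixed.
- exact: mshift1_fixed_of_V (V_of_scaled s2_neq0 V_Y).
- exact: mshift_fixed_of_scaled s2_neq0 Y_fixed.
Qed.

Lemma V1_of_minimal : V 1.
Proof.
have G_const := mshift1_invariant_polyC G_fixed.
have G0_neq0 : G@_0 != 0 by apply: contraNneq G_neq0 => G0; rewrite G_const G0 mpolyC0.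
by apply: (V_of_scaled G0_neq0); rewrite -mul_mpolyC mulr1 -G_const.
Qed.

End TensorProduct.

Unset Implicit Arguments. Set Strict Implicit.

Theorem proposition4p2 (R : realType) (l1 l2 s1 s2 e1 e2 : R[i])
  (V : {mpoly R[i][4]} -> Prop) :
  l1 != 0 -> l2 != 0 -> s1 != 0 -> s2 != 0 -> l1 != l2 ->
  is_submodule l1 e1 s1 l2 e2 s2 V ->
  (exists F, V F /\ F != 0) ->
  V 1.
Proof.
move=> l1_neq0 l2_neq0 s1_neq0 s2_neq0 l1_neq_l2 [_ [V_add [V_scale [_ [_ [V_actI _]]]]]].
case/(ex_minimal (fun F => msize F)) => G [V_G G_neq0] G_min.
apply: (V1_of_minimal V_add V_scale V_actI s1_neq0 s2_neq0 l1_neq0 l2_neq0 l1_neq_l2 V_G G_neq0).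
move=> H V_H; apply: contraTeq => H_neq0; rewrite -leqNgt; exact: G_min.
Qed.
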